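(* Let $V=\mathbb{C}^6$ and let $\pi\subset\mathbb{P}(\wedge^2V)$ be a projective plane all of whose points have rank exactly four. Suppose that $\pi$ contains general lines, that the pivots of all general lines in $\pi$ pass through a common point of $\mathbb{P}(V)$, and that these pivots are not all equal. Then $\pi$ is $PGL_6$-equivalent to the plane $\pi_p$ spanned by $e_0\wedge e_3+e_1\wedge e_2$, $e_0\wedge e_4+e_2\wedge e_3$, $e_0\wedge e_5+e_1\wedge e_3$, where $e_0,\dots,e_5$ is a basis of $V$.
   Context: Elements of $\wedge^2\mathbb{C}^6$ are identified with skew-symmetric $6\times6$ matrices; rank means matrix rank. A projective line in $\mathbb{P}(\wedge^2V)$ all of whose points have rank four is called general if it is $PGL_6$-equivalent to the line spanned by $e_0\wedge e_2+e_1\wedge e_3$ and $e_0\wedge e_4+e_1\wedge e_5$. A general line $\ell$ is contained in $\mathbb{P}(W\wedge V)$ for a unique $2$-dimensional subspace $W\subset V$ (for the line above, $W=\langle e_0,e_1\rangle$); the projective line $\mathbb{P}(W)\subset\mathbb{P}(V)$ is called the pivot of $\ell$. Work over $\mathbb{C}$. *)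

(* V = C^6 with C = R[i] for an arbitrary R : realType
   (every realType is isomorphic to the real numbers, so R[i] is C). *)
From HB Require Import structures.
From mathcomp Require Import all_boot all_order all_algebra.
From mathcomp Require Import reals.
From mathcomp.real_closed Require Import complex.
Set Implicit Arguments. Unset Strict Implicit. Unset Printing Implicit Defensive.
Import Order.TTheory GRing.Theory Num.Theory.
Local Open Scope ring_scope.

Section Wedge.
Variable K : fieldType.

Definition evec (i : nat) : 'rV[K]_6 := delta_mx 0 (inord i).

(* v /\ w as a skew-symmetric 6x6 matrix : entry (i,j) = v_i w_j - w_i v_j *)
Definition wedge (v w : 'rV[K]_6) : 'M[K]_6 := v^T *m w - w^T *m v.

Definition ew (i j : nat) : 'M[K]_6 := wedge (evec i) (evec j).

Definition skew (X : 'M[K]_6) : bool := X^T == - X.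

(* a projective linear subspace of P(/\^2 V) is given by a linear
   subspace S of skew-symmetric matrices; all of its points have rank r *)
Definition skew_space (S : {vspace 'M[K]_6}) : Prop :=
  forall X, X \in S -> skew X.

Definition all_rank (r : nat) (S : {vspace 'M[K]_6}) : Prop :=
  forall X, X \in S -> X != 0 -> \rank X = r.

(* action of GL_6 on /\^2 V : (g . (v /\ w)) = (g v) /\ (g w); with row
   vectors the transformed matrix is g^T X g (g acting on row vectors
   on the right; all of GL_6 is covered). *)
Definition gact (g : 'M[K]_6) (X : 'M[K]_6) : 'M[K]_6 := g^T *m X *m g.

(* S and T are PGL_6-equivalent (scalars act trivially on projective
   subspaces, so GL_6 suffices) *)
Definition PGL_equiv (S T : {vspace 'M[K]_6}) : Prop :=
  exists2 g : 'M[K]_6, g \in unitmx & (linfun (gact g) @: S)%VS = T.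

Definition L0 : {vspace 'M[K]_6} :=
  (<[ew 0 2 + ew 1 3]> + <[ew 0 4 + ew 1 5]>)%VS.

Definition general_line (l : {vspace 'M[K]_6}) : Prop :=
  [/\ \dim l = 2%N, skew_space l, all_rank 4 l & PGL_equiv L0 l].

Definition wedgeWV (W : {vspace 'rV[K]_6}) : {vspace 'M[K]_6} :=
  (\sum_(w <- vbasis W) \sum_(j < 6) <[wedge w (evec j)]>)%VS.

Definition is_pivot (l : {vspace 'M[K]_6}) (W : {vspace 'rV[K]_6}) : Prop :=
  \dim W = 2%N /\ (l <= wedgeWV W)%VS.

Definition pi_p : {vspace 'M[K]_6} :=
  (<[ew 0 3 + ew 1 2]> + <[ew 0 4 + ew 2 3]> + <[ew 0 5 + ew 1 3]>)%VS.

End Wedge.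

From HB Require Import structures.
From mathcomp Require Import all_boot all_order all_algebra.
From mathcomp Require Import reals.
From mathcomp.real_closed Require Import complex.
From mathcomp Require Import ring zify.
Set Implicit Arguments. Unset Strict Implicit. Unset Printing Implicit Defensive.
Import Order.TTheory GRing.Theory Num.Theory.
Local Open Scope ring_scope.

(* Two general lines of the plane [pi] meet in a form [X].  In a frame where
   [X = e0/\e2 + e1/\e3] and the first line is [<X, e0/\e4 + e1/\e5>], its pivot
   is [<e0, e1>], because a rank-four element of [W /\ V] contains [W] in its row
   space; rotating [e0, e1] we may take [e0] to be the common point [p] of the
   pivots.  The second pivot also lies in the row space of [X], and the way [X]
   contracts vectors orthogonal to it puts it inside [<e0, e1, e3>]; as the
   pivots differ, a shear makes it [<e0, e3>].  A form of the second line
   independent of [X] then lies in [e0 /\ V + e3 /\ V].  Rank four on the whole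
   plane forces [d2 = d4 = 0], [d5 != 0] and [zdisc != 0] for its coordinates,
   and then an explicit change of basis carries [pi_p] onto [pi].  Everything
   works over any field of characteristic other than 2. *)

Lemma gact_is_linear (K : fieldType) (g : 'M[K]_6) : linear (gact g).
Proof. by move=> a X Y; rewrite /gact mulmxDr mulmxDl -scalemxAr -scalemxAl. Qed.

HB.instance Definition _ (K : fieldType) (g : 'M[K]_6) :=
  GRing.isLinear.Build K 'M[K]_6 'M[K]_6 *:%R (gact g) (gact_is_linear g).

Section Lines.
Variable K : fieldType.

Lemma memv_add_lineP (vT : vectType K) (u v x : vT) :
  reflect (exists a b, x = a *: u + b *: v) (x \in <[u]> + <[v]>)%VS.
Proof.
apply: (iffP memv_addP).
  by move=> [_ /vlineP [a ->] [_ /vlineP [b ->] ->]]; exists a, b.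
move=> [a [b ->]]; exists (a *: u); first by rewrite memvZ // memv_line.
by exists (b *: v); rewrite // memvZ // memv_line.
Qed.

Lemma memv_add_line (vT : vectType K) (u v : vT) a b : a *: u + b *: v \in (<[u]> + <[v]>)%VS.
Proof. by apply/memv_add_lineP; exists a, b. Qed.

Lemma memv_add_linel (vT : vectType K) (u v : vT) : u \in (<[u]> + <[v]>)%VS.
Proof. exact: subvP (addvSl _ _) _ (memv_line u). Qed.

Lemma memv_add_liner (vT : vectType K) (u v : vT) : v \in (<[u]> + <[v]>)%VS.
Proof. exact: subvP (addvSr _ _) _ (memv_line v). Qed.

Lemma memv_add_line3 (vT : vectType K) (u v w : vT) a b c :
  a *: u + b *: v + c *: w \in (<[u]> + <[v]> + <[w]>)%VS.
Proof. by rewrite memv_add ?memv_add_line // memvZ // memv_line. Qed.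

Lemma dimv_add_line_leq (vT : vectType K) (u v : vT) : (\dim (<[u]> + <[v]>) <= 2)%N.
Proof.
apply: leq_trans (dimv_add_leqif _ _).1 _.
by rewrite !dim_vline; case: (u != 0); case: (v != 0).
Qed.

Lemma dimv2_lines (vT : vectType K) (W : {vspace vT}) :
  \dim W = 2%N -> exists u v, W = (<[u]> + <[v]>)%VS.
Proof.
move=> dW; have := span_basis (vbasisP W).
have : size (vbasis W : seq _) = 2%N by rewrite size_tuple.
case: (vbasis W : seq _) => [|u [|v [|? ?]]] // _ <-.
by exists u, v; rewrite !span_cons span_nil addv0.
Qed.

Lemma dimv2_line_through (vT : vectType K) (W : {vspace vT}) p :
  \dim W = 2%N -> p \in W -> p != 0 -> exists q, W = (<[p]> + <[q]>)%VS.
Proof.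
move=> dW pW pn0; have [u [v defW]] := dimv2_lines dW.
have /memv_add_lineP [a [b defp]] : p \in (<[u]> + <[v]>)%VS by rewrite -defW.
suff [q [uW vW]] : exists q, (u \in <[p]> + <[q]>)%VS /\ (v \in <[p]> + <[q]>)%VS.
  exists q; apply/eqP; rewrite eqEdim dW dimv_add_line_leq andbT.
  by rewrite defW subv_add -!memvE uW vW.
have [a0|an0] := eqVneq a 0.
  have bn0 : b != 0 by apply: contraNneq pn0 => b0; rewrite defp a0 b0 !scale0r addr0.
  exists u; split; apply/memv_add_lineP; first by exists 0, 1; rewrite scale0r scale1r add0r.
  by exists b^-1, 0; rewrite defp a0 scale0r add0r addr0 scalerA mulVf // scale1r.
exists v; split; apply/memv_add_lineP; last by exists 0, 1; rewrite scale0r scale1r add0r.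
exists a^-1, (- b / a); rewrite defp scalerDr !scalerA mulVf // scale1r -addrA -scalerDl.
have -> : a^-1 * b + - b / a = 0 by field.
by rewrite scale0r addr0.
Qed.

Lemma memv_add_line_submx m (u v x : 'rV[K]_m) :
  x \in (<[u]> + <[v]>)%VS -> (x <= col_mx u v)%MS.
Proof.
move=> /memv_add_lineP [a [b ->]]; rewrite -addsmxE addmx_sub // scalemx_sub //.
  exact: addsmxSl.
exact: addsmxSr.
Qed.

Lemma lines_in_plane_meet (vT : vectType K) (pi l1 l2 : {vspace vT}) :
  \dim pi = 3%N -> (l1 <= pi)%VS -> (l2 <= pi)%VS -> \dim l1 = 2%N -> \dim l2 = 2%N ->
  (l1 :&: l2)%VS != 0%VS.
Proof.
move=> dpi l1pi l2pi dl1 dl2; rewrite -dimv_eq0; apply/eqP => dcap.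
have := dimv_sum_cap l1 l2; rewrite dcap dl1 dl2 addn0 => dsum.
have := dimvS (_ : (l1 + l2 <= pi)%VS); rewrite dsum dpi subv_add l1pi l2pi.
by move/(_ isT).
Qed.

End Lines.

Definition frame (K : fieldType) (r : seq 'rV[K]_6) : 'M[K]_6 := \matrix_(i < 6) r`_i.
Definition L0a (K : fieldType) : 'M[K]_6 := ew K 0 2 + ew K 1 3.
Definition L0b (K : fieldType) : 'M[K]_6 := ew K 0 4 + ew K 1 5.

Definition pi_p1 (K : fieldType) : 'M[K]_6 := ew K 0 3 + ew K 1 2.
Definition pi_p2 (K : fieldType) : 'M[K]_6 := ew K 0 4 + ew K 2 3.
Definition pi_p3 (K : fieldType) : 'M[K]_6 := ew K 0 5 + ew K 1 3.

(* [zmx c d] is [e0 /\ c + e3 /\ d] for [c = (0, c1, c2, c3, c4, c5)] and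
   [d = (0, d1, d2, 0, d4, d5)]. *)
Definition zmx_entry (K : fieldType) (c1 c2 c3 c4 c5 d1 d2 d4 d5 : K) (i j : nat) : K :=
  match i, j with
  | 0, 1 => c1 | 0, 2 => c2 | 0, 3 => c3 | 0, 4 => c4 | 0, 5 => c5
  | 1, 0 => - c1 | 2, 0 => - c2 | 3, 0 => - c3 | 4, 0 => - c4 | 5, 0 => - c5
  | 3, 1 => d1 | 3, 2 => d2 | 3, 4 => d4 | 3, 5 => d5
  | 1, 3 => - d1 | 2, 3 => - d2 | 4, 3 => - d4 | 5, 3 => - d5
  | _, _ => 0
  end.

Definition zmx (K : fieldType) (c1 c2 c3 c4 c5 d1 d2 d4 d5 : K) : 'M[K]_6 :=
  \matrix_(i, j) zmx_entry c1 c2 c3 c4 c5 d1 d2 d4 d5 i j.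

Section Frames.
Variable K : fieldType.
Implicit Types (g h X Y : 'M[K]_6) (u v w : 'rV[K]_6) (r : seq 'rV[K]_6).
Local Notation L0a := (L0a K).
Local Notation L0b := (L0b K).

Lemma wedgeE u v i j : wedge u v i j = u 0 i * v 0 j - v 0 i * u 0 j.
Proof. by rewrite /wedge !mxE !big_ord1 !mxE. Qed.

Lemma evecE i j : (i < 6)%N -> evec K i 0 j = if (j : nat) == i then 1 else 0.
Proof. by move=> lti; rewrite /evec mxE eqxx /= -(inj_eq val_inj) /= inordK //; case: eqP. Qed.

Lemma evec_mulmxE n k (M : 'M[K]_(6, n)) j : (evec K k *m M) 0 j = M (inord k) j.
Proof. by rewrite /evec -rowE mxE. Qed.

Lemma wedge_submx m u v (S : 'M[K]_(m, 6)) :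
  (u <= S)%MS -> (v <= S)%MS -> (wedge u v <= S)%MS.
Proof.
move=> uS vS; rewrite /wedge addmx_sub ?eqmx_opp //.
  exact: submx_trans (submxMl _ _) vS.
exact: submx_trans (submxMl _ _) uS.
Qed.

Lemma row_full_evec m (M : 'M[K]_(m, 6)) :
  (forall k, (k < 6)%N -> (evec K k <= M)%MS) -> row_full M.
Proof.
move=> evM; rewrite /row_full eqn_leq rank_leq_col /= -{1}(mxrank1 K 6) mxrankS //.
apply/row_subP => i; rewrite rowE mulmx1.
by have := evM i (ltn_ord i); rewrite /evec inord_val.
Qed.

Lemma gact_wedge g u v : gact g (wedge u v) = wedge (u *m g) (v *m g).
Proof. by rewrite /gact /wedge mulmxBr mulmxBl !trmx_mul !mulmxA. Qed.

Lemma gact_mulmx h g X : gact (h *m g) X = gact g (gact h X).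
Proof. by rewrite /gact trmx_mul !mulmxA. Qed.

Lemma lfun_gact_mulmx h g :
  linfun (gact (h *m g)) = (linfun (gact g) \o linfun (gact h))%VF.
Proof. by apply/lfunP => X; rewrite comp_lfunE !lfunE /= gact_mulmx. Qed.

Lemma gactK g : g \in unitmx -> cancel (gact g) (gact (invmx g)).
Proof. by move=> gu X; rewrite -gact_mulmx mulmxV // /gact trmx1 mul1mx mulmx1. Qed.

Lemma gactVK g : g \in unitmx -> cancel (gact (invmx g)) (gact g).
Proof. by move=> gu X; rewrite -gact_mulmx mulVmx // /gact trmx1 mul1mx mulmx1. Qed.

Lemma mxrank_gact g X : g \in unitmx -> \rank (gact g X) = \rank X.
Proof.
move=> gu; have gfree : row_free g by rewrite /row_free mxrank_unit.
by rewrite /gact mxrankMfree // -mxrank_tr trmx_mul trmxK mxrankMfree ?mxrank_tr.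
Qed.

Lemma gact_skew g X : X^T = - X -> (gact g X)^T = - gact g X.
Proof. by move=> skX; rewrite /gact !trmx_mul trmxK skX mulNmx mulmxN !mulmxA. Qed.

Lemma gact_eq0 g X : g \in unitmx -> (gact g X == 0) = (X == 0).
Proof.
move=> gu; apply/eqP/eqP => [gX0|->]; last exact: linear0.
by rewrite -(gactK gu X) gX0 linear0.
Qed.

Lemma submx_gact g X v : g \in unitmx -> (v <= gact g X)%MS -> (v *m invmx g <= X)%MS.
Proof.
move=> gu /submxP [y ->]; rewrite /gact -!mulmxA mulmxV // mulmx1 mulmxA.
exact: submxMl.
Qed.

Lemma mxrank_col_gact g X Y : g \in unitmx ->
  \rank (col_mx (gact g X) (gact g Y)) = \rank (col_mx X Y).
Proof.
move=> gu; have gfree : row_free g by rewrite /row_free mxrank_unit.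
have /eqmxMunitP eqg : exists2 P, P \in unitmx &
    col_mx (gact g X) (gact g Y) = P *m (col_mx X Y *m g).
  exists (block_mx g^T 0 0 g^T); first by rewrite block_diag_mx_unit unitmx_tr gu.
  by rewrite mulmxA mul_block_col !mul0mx addr0 add0r mul_col_mx.
by rewrite (eqmx_rank eqg) mxrankMfree.
Qed.

Lemma evec_frame r k : (k < 6)%N -> evec K k *m frame r = r`_k.
Proof. by move=> ltk; rewrite /evec -rowE rowK inordK. Qed.

Lemma frame_sub r k : (k < 6)%N -> (r`_k <= frame r)%MS.
Proof. by move=> ltk; rewrite -evec_frame // submxMl. Qed.

Lemma nth_sub_rows n (s : seq 'rV[K]_n) k :
  (k < size s)%N -> (s`_k <= \matrix_(i < size s) s`_i)%MS.
Proof. by move=> lts; rewrite (eq_row_sub (Ordinal lts)) // rowK. Qed.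

Lemma gact_frame_ew r i j : (i < 6)%N -> (j < 6)%N ->
  gact (frame r) (ew K i j) = wedge r`_i r`_j.
Proof. by move=> lti ltj; rewrite /ew gact_wedge !evec_frame. Qed.

Lemma gact_frame_L0a r : gact (frame r) L0a = wedge r`_0 r`_2 + wedge r`_1 r`_3.
Proof. by rewrite /L0a linearD /= !gact_frame_ew. Qed.

Lemma gact_frame_L0b r : gact (frame r) L0b = wedge r`_0 r`_4 + wedge r`_1 r`_5.
Proof. by rewrite /L0b linearD /= !gact_frame_ew. Qed.

Lemma pi_pE : pi_p K = (<[pi_p1 K]> + <[pi_p2 K]> + <[pi_p3 K]>)%VS.
Proof. by []. Qed.

End Frames.

Ltac split_ord6 i := let lti := fresh in case: i => [[|[|[|[|[|[|?]]]]]] lti] //=.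
Ltac mx_entries :=
  rewrite /L0a /L0b /pi_p1 /pi_p2 /pi_p3 /zmx /ew !(wedgeE, evecE, evec_mulmxE, mxE) ?inordK //.
Ltac row_eq := apply/rowP; let j := fresh "j" in move=> j; mx_entries; split_ord6 j.
Ltac mx_eq := apply/matrixP; let a := fresh "a" in let b := fresh "b" in
  move=> a b; mx_entries; split_ord6 a; split_ord6 b.
Ltac in_frame r := first [ exact: (frame_sub r (k := 0) isT) | exact: (frame_sub r (k := 1) isT)
  | exact: (frame_sub r (k := 2) isT) | exact: (frame_sub r (k := 3) isT)
  | exact: (frame_sub r (k := 4) isT) | exact: (frame_sub r (k := 5) isT) ].
Ltac span_tac r :=
  repeat first [ in_frame r | apply: addmx_sub | apply: scalemx_sub | rewrite eqmx_opp ].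

Section Plane.
Variable K : fieldType.
Implicit Types (g X Y : 'M[K]_6) (u v w x : 'rV[K]_6).
Local Notation L0a := (L0a K).
Local Notation L0b := (L0b K).

Lemma L0_mix s t : (s != 0) || (t != 0) ->
  exists2 M, M \in unitmx & gact M L0a = s *: L0a + t *: L0b /\ gact M L0b \in L0 K.
Proof.
move=> st; pose u : K := if s != 0 then 0 else 1; pose w : K := if s != 0 then 1 else 0.
have d : s * w - t * u != 0.
  rewrite /u /w; case: (s =P 0) st => [->|/eqP sn0] /=;
  by rewrite ?mulr0 ?mulr1 ?subr0 ?sub0r ?oppr_eq0.
pose r := [:: evec K 0; evec K 1; s *: evec K 2 + t *: evec K 4;
  s *: evec K 3 + t *: evec K 5; u *: evec K 2 + w *: evec K 4; u *: evec K 3 + w *: evec K 5].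
exists (frame r).
  rewrite -row_full_unit; apply: row_full_evec => -[|[|[|[|[|[|k]]]]]] // _.
  - by in_frame r.
  - by in_frame r.
  - rewrite (_ : evec K 2 = (s * w - t * u)^-1 *: (w *: r`_2 - t *: r`_4)); first by span_tac r.
    by row_eq; field.
  - rewrite (_ : evec K 3 = (s * w - t * u)^-1 *: (w *: r`_3 - t *: r`_5)); first by span_tac r.
    by row_eq; field.
  - rewrite (_ : evec K 4 = (s * w - t * u)^-1 *: (s *: r`_4 - u *: r`_2)); first by span_tac r.
    by row_eq; field.
  - rewrite (_ : evec K 5 = (s * w - t * u)^-1 *: (s *: r`_5 - u *: r`_3)); first by span_tac r.
    by row_eq; field.
rewrite gact_frame_L0a gact_frame_L0b /=; split; last first.
  rewrite (_ : _ + _ = u *: L0a + w *: L0b); first exact: memv_add_line.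
  by mx_eq; ring.
by mx_eq; ring.
Qed.

Lemma L0_pivot_rotate a0 a1 : (a0 != 0) || (a1 != 0) ->
  exists2 M, M \in unitmx &
  [/\ evec K 0 *m M = a0 *: evec K 0 + a1 *: evec K 1, gact M L0a = L0a & gact M L0b = L0b].
Proof.
move=> a01; pose k0 : K := if a0 != 0 then 0 else 1; pose k1 : K := if a0 != 0 then 1 else 0.
have d : a0 * k1 - a1 * k0 != 0.
  rewrite /k0 /k1; case: (a0 =P 0) a01 => [->|/eqP a0n0] /=;
  by rewrite ?mulr0 ?mulr1 ?subr0 ?sub0r ?oppr_eq0 ?mul0r.
pose e := (a0 * k1 - a1 * k0)^-1.
pose r := [:: a0 *: evec K 0 + a1 *: evec K 1; k0 *: evec K 0 + k1 *: evec K 1;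
  e *: (k1 *: evec K 2 - k0 *: evec K 3); e *: (a0 *: evec K 3 - a1 *: evec K 2);
  e *: (k1 *: evec K 4 - k0 *: evec K 5); e *: (a0 *: evec K 5 - a1 *: evec K 4)].
exists (frame r).
  rewrite -row_full_unit; apply: row_full_evec => -[|[|[|[|[|[|k]]]]]] // _.
  - rewrite (_ : evec K 0 = e *: (k1 *: r`_0 - a1 *: r`_1)); first by span_tac r.
    by rewrite /r /e; row_eq; field.
  - rewrite (_ : evec K 1 = e *: (a0 *: r`_1 - k0 *: r`_0)); first by span_tac r.
    by rewrite /r /e; row_eq; field.
  - rewrite (_ : evec K 2 = a0 *: r`_2 + k0 *: r`_3); first by span_tac r.
    by rewrite /r /e; row_eq; field.
  - rewrite (_ : evec K 3 = a1 *: r`_2 + k1 *: r`_3); first by span_tac r.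
    by rewrite /r /e; row_eq; field.
  - rewrite (_ : evec K 4 = a0 *: r`_4 + k0 *: r`_5); first by span_tac r.
    by rewrite /r /e; row_eq; field.
  - rewrite (_ : evec K 5 = a1 *: r`_4 + k1 *: r`_5); first by span_tac r.
    by rewrite /r /e; row_eq; field.
rewrite evec_frame // gact_frame_L0a gact_frame_L0b /=.
by split=> //; rewrite /r /e; mx_eq; field.
Qed.

Lemma L0_pivot_shear b0 b1 b3 : b3 != 0 ->
  exists2 M, M \in unitmx &
  [/\ evec K 0 *m M = evec K 0,
      evec K 3 *m M = b0 *: evec K 0 + b1 *: evec K 1 + b3 *: evec K 3,
      gact M L0a = L0a & gact M L0b = L0b].
Proof.
move=> b3n0; pose r := [:: evec K 0; b3^-1 *: evec K 1; evec K 2 + (b0 / b3) *: evec K 1;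
  b0 *: evec K 0 + b1 *: evec K 1 + b3 *: evec K 3; evec K 4; b3 *: evec K 5].
exists (frame r).
  rewrite -row_full_unit; apply: row_full_evec => -[|[|[|[|[|[|k]]]]]] // _.
  - by in_frame r.
  - rewrite (_ : evec K 1 = b3 *: r`_1); first by span_tac r.
    by row_eq; field.
  - rewrite (_ : evec K 2 = r`_2 - b0 *: r`_1); first by span_tac r.
    by row_eq; field.
  - rewrite (_ : evec K 3 = b3^-1 *: (r`_3 - b0 *: r`_0 - (b1 * b3) *: r`_1)).
      by span_tac r.
    by row_eq; field.
  - by in_frame r.
  - rewrite (_ : evec K 5 = b3^-1 *: r`_5); first by span_tac r.
    by row_eq; field.
rewrite !evec_frame // gact_frame_L0a gact_frame_L0b /=.
by split=> //; mx_eq; field.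
Qed.

Lemma L0b_neq0 : L0b != 0.
Proof.
apply/eqP => /matrixP /(_ (inord 0) (inord 4)); mx_entries.
by move/eqP; rewrite /= !(mulr0, mul0r, mulr1, subr0, addr0, add0r) oner_eq0.
Qed.

Lemma mxrank_col_L0 : \rank (col_mx L0a L0b) = 6%N.
Proof.
apply/eqP; apply: row_full_evec => k ltk.
have L0aS : (L0a <= col_mx L0a L0b)%MS by rewrite -addsmxE addsmxSl.
have L0bS : (L0b <= col_mx L0a L0b)%MS by rewrite -addsmxE addsmxSr.
have rowS i M : (M <= col_mx L0a L0b)%MS -> (evec K i *m M <= col_mx L0a L0b)%MS.
  by move/(submx_trans (submxMl _ _)).
move: k ltk => [|[|[|[|[|[|k]]]]]] // _.
- rewrite (_ : evec K 0 = - (evec K 2 *m L0a)); first by rewrite eqmx_opp rowS.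
  by row_eq; ring.
- rewrite (_ : evec K 1 = - (evec K 3 *m L0a)); first by rewrite eqmx_opp rowS.
  by row_eq; ring.
- rewrite (_ : evec K 2 = evec K 0 *m L0a); first exact: rowS.
  by row_eq; ring.
- rewrite (_ : evec K 3 = evec K 1 *m L0a); first exact: rowS.
  by row_eq; ring.
- rewrite (_ : evec K 4 = evec K 0 *m L0b); first exact: rowS.
  by row_eq; ring.
rewrite (_ : evec K 5 = evec K 1 *m L0b); first exact: rowS.
by row_eq; ring.
Qed.

Lemma submx_L0a_coord x : (x <= L0a)%MS -> x 0 (inord 4) = 0 /\ x 0 (inord 5) = 0.
Proof.
move=> /submxP [y ->]; rewrite !mxE; split; apply: big1 => k _;
  by mx_entries; rewrite /= !(mulr0, mul0r, subr0, addr0).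
Qed.

Lemma submx_L0b_coord x : (x <= L0b)%MS -> x 0 (inord 2) = 0 /\ x 0 (inord 3) = 0.
Proof.
move=> /submxP [y ->]; rewrite !mxE; split; apply: big1 => k _;
  by mx_entries; rewrite /= !(mulr0, mul0r, subr0, addr0).
Qed.

Lemma row6E x : x = x 0 (inord 0) *: evec K 0 + x 0 (inord 1) *: evec K 1
  + x 0 (inord 2) *: evec K 2 + x 0 (inord 3) *: evec K 3 + x 0 (inord 4) *: evec K 4
  + x 0 (inord 5) *: evec K 5.
Proof.
apply/rowP => j; rewrite !(evecE, mxE) // -{1}(inord_val j).
by case: j => [[|[|[|[|[|[|?]]]]]] ?] //=; ring.
Qed.

Lemma submx_L0a_L0b x :
  (x <= L0a)%MS -> (x <= L0b)%MS -> x \in (<[evec K 0]> + <[evec K 1]>)%VS.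
Proof.
move=> /submx_L0a_coord [x4 x5] /submx_L0b_coord [x2 x3].
by rewrite (row6E x) x2 x3 x4 x5 !scale0r !addr0 memv_add_line.
Qed.

Definition perp_into (W : {vspace 'rV[K]_6}) X : Prop :=
  forall y, (forall w, w \in W -> y *m w^T = 0) -> y *m X \in W.

Lemma wedgeWV_perp_into W X : X \in wedgeWV W -> perp_into W X.
Proof.
pose P (U : {vspace 'M[K]_6}) := forall X, X \in U -> perp_into W X.
have P0 : P 0%VS by move=> Y; rewrite memv0 => /eqP -> y _; rewrite mulmx0 mem0v.
have PD U V : P U -> P V -> P (U + V)%VS.
  move=> PU PV _ /memv_addP [A AU [B BV ->]] y yW.
  by rewrite mulmxDr memvD //; [apply: PU | apply: PV].
rewrite /wedgeWV big_seq; move: X; apply: (big_ind P) => // w wB.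
apply: (big_ind P) => // j _ _ /vlineP [a ->] y yW.
rewrite -scalemxAr memvZ // /wedge mulmxBr !mulmxA (yW _ (vbasis_mem wB)) mul0mx sub0r.
by rewrite [y *m _]mx11_scalar mul_scalar_mx memvN memvZ // vbasis_mem.
Qed.

Lemma perp_into_submx W X : \dim W = 2%N -> perp_into W X -> \rank X = 4%N ->
  forall x, x \in W -> (x <= X)%MS.
Proof.
(* The rows of [N] span the annihilator of [W]: [N X <= W], and
   [\rank (N X) >= 4 + 4 - 6] forces [N X = W]. *)
move=> dW WX rX; have [p [q defW]] := dimv2_lines dW.
set P := col_mx p q; set N := kermx P^T.
have NX_P : (N *m X <= P)%MS.
  apply/row_subP => i; rewrite row_mul; apply: memv_add_line_submx; rewrite -defW; apply: WX.
  have /sub_kermxP : (row i N <= N)%MS by exact: row_sub.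
  rewrite tr_col_mx mul_mx_row => /eqP; rewrite -row_mx0 => /eqP /eq_row_mx [Np Nq] w.
  rewrite defW => /memv_add_lineP [a [b ->]].
  by rewrite linearD /= !linearZ /= mulmxDr -!scalemxAr Np Nq !scaler0 addr0.
have rN : \rank N = (6 - \rank P)%N by rewrite mxrank_ker mxrank_tr.
have rNX := mxrank_mul_min N X; have rP : (\rank P <= 2)%N := rank_leq_row P.
have P_NX : (P <= N *m X)%MS.
  rewrite -(mxrank_leqif_sup NX_P); have := mxrankS NX_P; lia.
move=> x; rewrite defW => /memv_add_line_submx xP.
exact: submx_trans xP (submx_trans P_NX (submxMl _ _)).
Qed.

Lemma pivot_of_frame g W : g \in unitmx -> \dim W = 2%N ->
  perp_into W (gact g L0a) -> perp_into W (gact g L0b) ->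
  \rank (gact g L0a) = 4%N -> \rank (gact g L0b) = 4%N ->
  W = (<[evec K 0 *m g]> + <[evec K 1 *m g]>)%VS.
Proof.
move=> gu dW Wa Wb ra rb; apply/eqP; rewrite eqEdim dW dimv_add_line_leq andbT.
apply/subvP => x xW.
have xa := submx_gact gu (perp_into_submx dW Wa ra xW).
have xb := submx_gact gu (perp_into_submx dW Wb rb xW).
have /memv_add_lineP [a [b e]] := submx_L0a_L0b xa xb.
by apply/memv_add_lineP; exists a, b; rewrite -[x](mulmxKV gu) e mulmxDl -!scalemxAl.
Qed.

Lemma evec_mulmx_neq0 g k : g \in unitmx -> (k < 6)%N -> evec K k *m g != 0.
Proof.
move=> gu ltk; apply: contraTneq isT => /(congr1 (mulmx^~ (invmx g))).
rewrite mulmxK // mul0mx => /rowP /(_ (inord k)); rewrite evecE ?inordK // mxE eqxx.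
by move/eqP; rewrite oner_eq0.
Qed.

(* [y := k2 e1 - k1 e2] in the frame of [g] is orthogonal to [e0] and [q], and
   [y L0a = k1 e0 + k2 e3] lies in [<e0, q>] only if [k2 ^+ 2 = 0]. *)
Lemma perp_frame_coord2 g q : g \in unitmx ->
  perp_into (<[evec K 0 *m g]> + <[q]>)%VS (gact g L0a) -> (q *m invmx g) 0 (inord 2) = 0.
Proof.
move=> gu perpq; set k := q *m invmx g.
have defq : q = k *m g by rewrite /k mulmxKV.
clearbody k; subst q.
set k1 := k 0 (inord 1); set k2 := k 0 (inord 2).
set y := k2 *: evec K 1 - k1 *: evec K 2.
have gTK z : z *m (invmx g)^T *m g^T = z by rewrite -mulmxA -trmx_mul mulmxV // trmx1 mulmx1.
have /perpq : forall w, w \in (<[evec K 0 *m g]> + <[k *m g]>)%VS ->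
    y *m (invmx g)^T *m w^T = 0.
  move=> _ /memv_add_lineP [a [b ->]].
  rewrite !scalemxAl -mulmxDl trmx_mul mulmxA gTK.
  apply/rowP => i; rewrite !ord1 /y mulmxBl -!scalemxAl.
  by rewrite !(evec_mulmxE, evecE, mxE) ?inordK //= /k1 /k2; ring.
rewrite /gact !mulmxA gTK.
have -> : y *m L0a = k1 *: evec K 0 + k2 *: evec K 3.
  by rewrite /y mulmxBl -!scalemxAl; row_eq; ring.
move=> /memv_add_lineP [a [b /(congr1 (mulmx^~ (invmx g)))]].
rewrite mulmxK // mulmxDl -!scalemxAl !mulmxK // => e.
have := congr1 (fun z : 'rV[K]_6 => z 0 (inord 2)) e.
have := congr1 (fun z : 'rV[K]_6 => z 0 (inord 3)) e.
rewrite /= !(evecE, mxE) ?inordK //= -/k2 !(mulr0, mulr1, addr0, add0r) => e3 e2.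
have : k2 * k2 = 0 by rewrite {1}e3 mulrAC -e2 mul0r.
by move/eqP; rewrite mulf_eq0 orbb => /eqP.
Qed.

Lemma pivot_second_frame g W1 W2 : g \in unitmx ->
  W1 = (<[evec K 0 *m g]> + <[evec K 1 *m g]>)%VS ->
  \dim W2 = 2%N -> evec K 0 *m g \in W2 -> W2 != W1 ->
  perp_into W2 (gact g L0a) -> \rank (gact g L0a) = 4%N ->
  exists2 g', g' \in unitmx & [/\ W2 = (<[evec K 0 *m g']> + <[evec K 3 *m g']>)%VS,
    gact g' L0a = gact g L0a & gact g' L0b = gact g L0b].
Proof.
move=> gu defW1 dW2 e0W2 W21 perpa ra.
have [q defW2] := dimv2_line_through dW2 e0W2 (evec_mulmx_neq0 gu (isT : 0 < 6)%N).
have qW2 : q \in W2 by rewrite defW2 memv_add_liner.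
set k := q *m invmx g.
have [k4 k5] := submx_L0a_coord (submx_gact gu (perp_into_submx dW2 perpa ra qW2)).
have k2 : k 0 (inord 2) = 0 by apply: (perp_frame_coord2 gu); rewrite -defW2.
have defq : q = (k 0 (inord 0) *: evec K 0 + k 0 (inord 1) *: evec K 1
                 + k 0 (inord 3) *: evec K 3) *m g.
  by rewrite -[q](mulmxKV gu) -/k {1}(row6E k) k2 k4 k5 !scale0r !addr0.
have k3n0 : k 0 (inord 3) != 0.
  apply: contra_neq W21 => k30; apply/eqP.
  rewrite eqEdim dW2 {2}defW1 dimv_add_line_leq andbT defW2 subv_add -!memvE.
  rewrite defW1 memv_add_linel defq k30 scale0r addr0 mulmxDl -!scalemxAl.
  exact: memv_add_line.
have [M Mu [e0M e3M aM bM]] := L0_pivot_shear (k 0 (inord 0)) (k 0 (inord 1)) k3n0.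
exists (M *m g); first by rewrite unitmx_mul Mu gu.
by rewrite !gact_mulmx aM bM !mulmxA e0M e3M -defq.
Qed.

Section ZMatrix.
Variables c1 c2 c3 c4 c5 d1 : K.

Lemma zmx_full_rank (d2 d4 d5 x y : K) : y != 0 -> (x + c2) * d4 - (y + c4) * d2 != 0 ->
  \rank (x *: L0a + y *: L0b + zmx c1 c2 c3 c4 c5 d1 d2 d4 d5)%R = 6%N.
Proof.
move=> yn0 Dn0; set M := (X in \rank X).
set u2 := x + c2; set u4 := y + c4; set D := u2 * d4 - u4 * d2.
have rowM k : (evec K k *m M <= M)%MS by exact: submxMl.
have e0M : (evec K 0 <= M)%MS.
  rewrite (_ : evec K 0 = (- D^-1) *: (d4 *: (evec K 2 *m M) - d2 *: (evec K 4 *m M))).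
    by rewrite scalemx_sub // addmx_sub // ?eqmx_opp scalemx_sub.
  by rewrite /M /D /u2 /u4; row_eq; field.
have e3M : (evec K 3 <= M)%MS.
  rewrite (_ : evec K 3 = D^-1 *: (u4 *: (evec K 2 *m M) - u2 *: (evec K 4 *m M))).
    by rewrite scalemx_sub // addmx_sub // ?eqmx_opp scalemx_sub.
  by rewrite /M /D /u2 /u4; row_eq; field.
have e1M : (evec K 1 <= M)%MS.
  rewrite (_ : evec K 1 = (- y^-1) *: (evec K 5 *m M + c5 *: evec K 0 + d5 *: evec K 3)).
    by rewrite scalemx_sub // !addmx_sub // scalemx_sub.
  by rewrite /M; row_eq; field.
have e5M : (evec K 5 <= M)%MS.
  rewrite (_ : evec K 5 = y^-1 *: (evec K 1 *m M + c1 *: evec K 0 - (x - d1) *: evec K 3)).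
    by rewrite scalemx_sub // !addmx_sub // ?eqmx_opp scalemx_sub.
  by rewrite /M; row_eq; field.
have e2M : (evec K 2 <= M)%MS.
  rewrite (_ : evec K 2 = D^-1 *: (
      d4 *: (evec K 0 *m M - c1 *: evec K 1 - c3 *: evec K 3 - c5 *: evec K 5)
      - u4 *: (evec K 3 *m M + c3 *: evec K 0 + (x - d1) *: evec K 1 - d5 *: evec K 5))).
    by rewrite scalemx_sub // addmx_sub // ?eqmx_opp scalemx_sub //
      !addmx_sub // ?eqmx_opp ?scalemx_sub.
  by rewrite /M /D /u2 /u4; row_eq; field.
have e4M : (evec K 4 <= M)%MS.
  rewrite (_ : evec K 4 = D^-1 *: (
      u2 *: (evec K 3 *m M + c3 *: evec K 0 + (x - d1) *: evec K 1 - d5 *: evec K 5)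
      - d2 *: (evec K 0 *m M - c1 *: evec K 1 - c3 *: evec K 3 - c5 *: evec K 5))).
    by rewrite scalemx_sub // addmx_sub // ?eqmx_opp scalemx_sub //
      !addmx_sub // ?eqmx_opp ?scalemx_sub.
  by rewrite /M /D /u2 /u4; row_eq; field.
by apply/eqP; apply: row_full_evec => -[|[|[|[|[|[|k]]]]]].
Qed.

(* Otherwise some [x L0a + y L0b + zmx] has full rank; [2 != 0] provides a
   [y] outside [{0, - c4}]. *)
Lemma zmx_d2_d4 (d2 d4 d5 : K) : 2%:R != 0 :> K ->
  all_rank 4 (<[L0a]> + <[L0b]> + <[zmx c1 c2 c3 c4 c5 d1 d2 d4 d5]>)%VS -> d2 = 0 /\ d4 = 0.
Proof.
move=> two_n0 rk4.
have not_full (x y : K) : y != 0 -> (x + c2) * d4 - (y + c4) * d2 != 0 -> False.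
  move=> yn0 Dn0; have r6 := zmx_full_rank d5 yn0 Dn0.
  have Mn0 : x *: L0a + y *: L0b + 1 *: zmx c1 c2 c3 c4 c5 d1 d2 d4 d5 != 0.
    by rewrite scale1r; apply/eqP => M0; move: r6; rewrite M0 mxrank0.
  by have := rk4 _ (memv_add_line3 _ _ _ _ _ _) Mn0; rewrite scale1r r6.
have [d40|d4n0] := eqVneq d4 0; last first.
  exfalso; apply: (not_full (((1 + c4) * d2 + d4) / d4 - c2) 1); first exact: oner_neq0.
  suff -> : (((1 + c4) * d2 + d4) / d4 - c2 + c2) * d4 - (1 + c4) * d2 = d4 by [].
  by field.
split=> //; apply/eqP; apply: contraT => d2n0; subst d4; exfalso.
have [c4e|c4n] := eqVneq (1 + c4) 0.
  apply: (not_full 0 2%:R two_n0); rewrite mulr0 sub0r oppr_eq0 mulf_neq0 //.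
  rewrite (_ : 2%:R + c4 = 1 + (1 + c4)); last by ring.
  by rewrite c4e addr0 oner_neq0.
by apply: (not_full 0 1 (oner_neq0 K)); rewrite mulr0 sub0r oppr_eq0 mulf_neq0 // addrC.
Qed.

(* For [d2 = d4 = d5 = 0] all rows of [L0a] and [zmx] lie in [<e0, e1, e2, e3, c>]. *)
Lemma zmx_col_rank_lt6 : (\rank (col_mx L0a (zmx c1 c2 c3 c4 c5 d1 0 0 0)) < 6)%N.
Proof.
set c := c1 *: evec K 1 + c2 *: evec K 2 + c3 *: evec K 3 + c4 *: evec K 4 + c5 *: evec K 5.
set s := [:: evec K 0; evec K 1; evec K 2; evec K 3; c].
set S := \matrix_(i < size s) s`_i.
have s0 : (evec K 0 <= S)%MS by exact: (nth_sub_rows (s := s) (k := 0) isT).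
have s1 : (evec K 1 <= S)%MS by exact: (nth_sub_rows (s := s) (k := 1) isT).
have s2 : (evec K 2 <= S)%MS by exact: (nth_sub_rows (s := s) (k := 2) isT).
have s3 : (evec K 3 <= S)%MS by exact: (nth_sub_rows (s := s) (k := 3) isT).
have sc : (c <= S)%MS by exact: (nth_sub_rows (s := s) (k := 4) isT).
have -> : zmx c1 c2 c3 c4 c5 d1 0 0 0 =
    wedge (evec K 0) c + wedge (evec K 3) (d1 *: evec K 1) by rewrite /c; mx_eq; ring.
have sub : (col_mx L0a (wedge (evec K 0) c + wedge (evec K 3) (d1 *: evec K 1)) <= S)%MS.
  rewrite col_mx_sub /L0a /ew; apply/andP; split;
    by repeat first [ assumption | apply: wedge_submx | apply: addmx_sub | apply: scalemx_sub ].
apply: leq_ltn_trans (mxrankS sub) _.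
exact: leq_ltn_trans (rank_leq_row S) _.
Qed.

Definition zdisc (d5 : K) := c1 * d5 + c3 * c4 - c5 * (d1 + c2).

(* If [zdisc d5 = 0], the element [- c2 L0a - c4 L0b + zmx] of the plane is
   [e0 /\ w + f1 /\ f2] with [w] in [<f1, f2>], hence of rank at most 3. *)
Lemma zmx_zdisc_neq0 (d5 : K) : d5 != 0 ->
  all_rank 4 (<[L0a]> + <[L0b]> + <[zmx c1 c2 c3 c4 c5 d1 0 0 d5]>)%VS -> zdisc d5 != 0.
Proof.
move=> d5n0 rk4; apply: contraT; rewrite negbK /zdisc => /eqP D0.
have ec1 : c1 = (c5 * (d1 + c2) - c3 * c4) / d5.
  by apply: (mulIf d5n0); rewrite mulfVK // -[c1 * d5]subr0 -D0; ring.
set f1 := (- c4) *: evec K 1 + d5 *: evec K 3.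
set f2 := ((d1 + c2) / d5) *: evec K 1 + evec K 5.
set w := c1 *: evec K 1 + c3 *: evec K 3 + c5 *: evec K 5.
set Z0 := (- c2) *: L0a + (- c4) *: L0b + 1 *: zmx c1 c2 c3 c4 c5 d1 0 0 d5.
have eZ0 : Z0 = wedge (evec K 0) w + wedge f1 f2 by rewrite /Z0 /w /f1 /f2; mx_eq; field.
have ew : w = (c3 / d5) *: f1 + c5 *: f2 by rewrite /w /f1 /f2 ec1; row_eq; field.
set s := [:: evec K 0; f1; f2].
set S := \matrix_(i < size s) s`_i.
have s0 : (evec K 0 <= S)%MS by exact: (nth_sub_rows (s := s) (k := 0) isT).
have s1 : (f1 <= S)%MS by exact: (nth_sub_rows (s := s) (k := 1) isT).
have s2 : (f2 <= S)%MS by exact: (nth_sub_rows (s := s) (k := 2) isT).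
have sub : (Z0 <= S)%MS by rewrite eZ0 addmx_sub ?wedge_submx // ew addmx_sub ?scalemx_sub.
have Z0n0 : Z0 != 0.
  apply/eqP => /matrixP /(_ (inord 3) (inord 5)); rewrite /Z0; mx_entries => /= /eqP.
  by rewrite !(mulr0, mul0r, mulr1, mul1r, subr0, sub0r, addr0, add0r, oppr0); apply/negP.
have := rk4 _ (memv_add_line3 _ _ _ _ _ _) Z0n0; rewrite -/Z0 => r4.
by have := leq_trans (mxrankS sub) (rank_leq_row S); rewrite r4.
Qed.

Lemma zmx_pi_p_frame (d5 : K) : d5 != 0 -> zdisc d5 != 0 ->
  exists2 h, h \in unitmx &
  (linfun (gact h) @: pi_p K <= <[L0a]> + <[L0b]> + <[zmx c1 c2 c3 c4 c5 d1 0 0 d5]>)%VS.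
Proof.
move=> d5n0 Dn0; have Dn0' : c1 * d5 + c3 * c4 - c5 * (d1 + c2) != 0 := Dn0.
set D := zdisc d5; set Z := zmx c1 c2 c3 c4 c5 d1 0 0 d5.
set f3 := c1 *: evec K 1 + c3 *: evec K 3 + c5 *: evec K 5.
pose r := [:: evec K 0; (- c4) *: evec K 1 + d5 *: evec K 3;
  ((d1 + c2) / d5) *: evec K 1 + evec K 5; f3; (- (D / d5)) *: evec K 4 - (c3 / d5) *: f3;
  (- D) *: evec K 2 + c5 *: f3].
exists (frame r).
  rewrite -row_full_unit; apply: row_full_evec => -[|[|[|[|[|[|k]]]]]] // _.
  - by in_frame r.
  - rewrite (_ : evec K 1 = D^-1 *: ((- c3) *: r`_1 - (d5 * c5) *: r`_2 + d5 *: r`_3)).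
      by span_tac r.
    by rewrite /r /f3 /D /zdisc; row_eq; field; rewrite ?d5n0 ?Dn0'.
  - rewrite (_ : evec K 2 = (- D^-1) *: (r`_5 - c5 *: r`_3)); first by span_tac r.
    by rewrite /r /f3 /D /zdisc; row_eq; field; rewrite ?d5n0 ?Dn0'.
  - rewrite (_ : evec K 3 = D^-1 *: ((c1 - (d1 + c2) / d5 * c5) *: r`_1 - (c4 * c5) *: r`_2
                                      + c4 *: r`_3)); first by span_tac r.
    by rewrite /r /f3 /D /zdisc; row_eq; field; rewrite ?d5n0 ?Dn0'.
  - rewrite (_ : evec K 4 = (- (d5 / D)) *: (r`_4 + (c3 / d5) *: r`_3)); first by span_tac r.
    by rewrite /r /f3 /D /zdisc; row_eq; field; rewrite ?d5n0 ?Dn0'.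
  - rewrite (_ : evec K 5 = D^-1 *: (((d1 + c2) / d5 * c3) *: r`_1 + (c4 * c3 + d5 * c1) *: r`_2
                                      - (d1 + c2) *: r`_3)); first by span_tac r.
    by rewrite /r /f3 /D /zdisc; row_eq; field; rewrite ?d5n0 ?Dn0'.
rewrite pi_pE !limgD !limg_line !lfunE /= !subv_add -!memvE.
have -> : gact (frame r) (pi_p1 K) = (- c2) *: L0a + (- c4) *: L0b + 1 *: Z.
  by rewrite /pi_p1 linearD /= !gact_frame_ew //= /f3 /Z; mx_eq; field; rewrite ?d5n0 ?Dn0'.
have -> : gact (frame r) (pi_p2 K) =
    (c2 * c3 / d5) *: L0a + ((c3 * c4 - D) / d5) *: L0b + (- c3 / d5) *: Z.
  rewrite /pi_p2 linearD /= !gact_frame_ew //= /f3 /Z /D /zdisc.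
  by mx_eq; field; rewrite ?d5n0 ?Dn0'.
have -> : gact (frame r) (pi_p3 K) = (- D - c5 * c2) *: L0a + (- c5 * c4) *: L0b + c5 *: Z.
  rewrite /pi_p3 linearD /= !gact_frame_ew //= /f3 /Z /D /zdisc.
  by mx_eq; field; rewrite ?d5n0 ?Dn0'.
by rewrite !memv_add_line3.
Qed.

End ZMatrix.

Lemma perp_e0e3_block0 g Y : g \in unitmx ->
  perp_into (<[evec K 0 *m g]> + <[evec K 3 *m g]>)%VS Y ->
  forall i j, i \in [:: 1; 2; 4; 5]%N -> j \in [:: 1; 2; 4; 5]%N ->
  gact (invmx g) Y (inord i) (inord j) = 0.
Proof.
move=> gu perpY i j Ii Ij; have := gactVK gu Y.
set Z := gact (invmx g) Y => defY; clearbody Z; subst Y.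
have lt6 k : k \in [:: 1; 2; 4; 5]%N -> (k < 6)%N by rewrite !inE => /or4P [] /eqP ->.
have [lt6i lt6j] := (lt6 i Ii, lt6 j Ij).
have gTK z : z *m (invmx g)^T *m g^T = z by rewrite -mulmxA -trmx_mul mulmxV // trmx1 mulmx1.
set y := evec K i *m (invmx g)^T.
have /perpY : forall w, w \in (<[evec K 0 *m g]> + <[evec K 3 *m g]>)%VS -> y *m w^T = 0.
  move=> _ /memv_add_lineP [a [b ->]]; rewrite !scalemxAl -mulmxDl trmx_mul mulmxA gTK.
  apply/rowP => i'; rewrite !ord1 !(evec_mulmxE, evecE, mxE) ?inordK //.
  by move: Ii; rewrite !inE => /or4P [] /eqP -> /=; ring.
rewrite /gact /y !mulmxA gTK => /memv_add_lineP [a [b]].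
move/(congr1 (mulmx^~ (invmx g))); rewrite mulmxK // mulmxDl -!scalemxAl !mulmxK //.
move=> /rowP /(_ (inord j)); rewrite evec_mulmxE => ->.
rewrite !(evecE, mxE) ?inordK //.
by move: Ij; rewrite !inE => /or4P [] /eqP -> /=; ring.
Qed.

Lemma skew_block0_zmx (Z : 'M[K]_6) : 2%:R != 0 :> K -> Z^T = - Z ->
  (forall i j, i \in [:: 1; 2; 4; 5]%N -> j \in [:: 1; 2; 4; 5]%N ->
     Z (inord i) (inord j) = 0) ->
  Z = zmx (Z (inord 0) (inord 1)) (Z (inord 0) (inord 2)) (Z (inord 0) (inord 3))
          (Z (inord 0) (inord 4)) (Z (inord 0) (inord 5)) (Z (inord 3) (inord 1))
          (Z (inord 3) (inord 2)) (Z (inord 3) (inord 4)) (Z (inord 3) (inord 5)).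
Proof.
move=> two_n0 skZ Z0.
have antisym i j : Z j i = - Z i j by have /matrixP /(_ i j) := skZ; rewrite !mxE.
have diag0 i : Z i i = 0.
  apply/eqP; rewrite -(mulrI_eq0 _ (lregP two_n0)) mulr_natl mulr2n.
  by rewrite {1}antisym addNr.
apply/matrixP => a b; rewrite -{1}[a]inord_val -{1}[b]inord_val /zmx mxE.
by case: a => [[|[|[|[|[|[|?]]]]]] ?]; case: b => [[|[|[|[|[|[|?]]]]]] ?] //=;
  first [ exact: diag0 | exact: antisym | by apply: Z0 ].
Qed.

Lemma all_rank_limg r g (S pi : {vspace 'M[K]_6}) : g \in unitmx ->
  (linfun (gact g) @: S <= pi)%VS -> all_rank r pi -> all_rank r S.
Proof.
move=> gu Spi rk X XS Xn0; rewrite -(mxrank_gact X gu).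
apply: rk; last by rewrite gact_eq0.
have -> : gact g X = linfun (gact g) X by rewrite lfunE.
by rewrite (subvP Spi) ?memv_img.
Qed.

Lemma dim_pi_p : \dim (pi_p K) = 3%N.
Proof.
have -> : pi_p K = <<[:: pi_p1 K; pi_p2 K; pi_p3 K]>>%VS.
  by rewrite pi_pE !span_cons span_nil addv0 addvA.
have /eqP -> // : free [:: pi_p1 K; pi_p2 K; pi_p3 K].
rewrite free_cons free_cons seq1_free span_seq1 span_cons span_seq1; apply/and3P; split.
- apply/memv_add_lineP => -[a [b]] /matrixP /(_ (inord 0) (inord 3)); mx_entries.
  by move/eqP; rewrite /= !(mulr0, mul0r, mulr1, subr0, addr0, add0r) oner_eq0.
- apply/negP => /vlineP [a] /matrixP /(_ (inord 0) (inord 4)); mx_entries.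
  by move/eqP; rewrite /= !(mulr0, mul0r, mulr1, subr0, addr0, add0r) oner_eq0.
- apply/eqP => /matrixP /(_ (inord 0) (inord 5)); mx_entries.
  by move/eqP; rewrite /= !(mulr0, mul0r, mulr1, subr0, addr0, add0r) oner_eq0.
Qed.

Lemma PGL_equiv_pi_p_limg (pi : {vspace 'M[K]_6}) g : \dim pi = 3%N -> g \in unitmx ->
  (linfun (gact g) @: pi_p K <= pi)%VS -> PGL_equiv (pi_p K) pi.
Proof.
move=> dpi gu sub; exists g => //; apply/eqP; rewrite eqEdim sub dpi.
have /eqP kerg : lker (linfun (gact g)) == 0%VS.
  by apply/lker0P => X Y; rewrite !lfunE /= => /(congr1 (gact (invmx g))); rewrite !gactK.
by rewrite limg_dim_eq ?dim_pi_p // kerg capv0.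
Qed.

Lemma plane_normal_form (pi : {vspace 'M[K]_6}) g (c1 c2 c3 c4 c5 d1 d2 d4 d5 : K) :
  2%:R != 0 :> K -> \dim pi = 3%N -> all_rank 4 pi -> g \in unitmx ->
  (linfun (gact g) @: (<[L0a]> + <[L0b]> + <[zmx c1 c2 c3 c4 c5 d1 d2 d4 d5]>) <= pi)%VS ->
  \rank (col_mx L0a (zmx c1 c2 c3 c4 c5 d1 d2 d4 d5)) = 6%N ->
  PGL_equiv (pi_p K) pi.
Proof.
move=> two_n0 dpi rkpi gu sub rcol.
have rk4 := all_rank_limg gu sub rkpi.
have [d20 d40] := zmx_d2_d4 two_n0 rk4; subst d2 d4.
have d5n0 : d5 != 0.
  apply/eqP => d50; subst d5.
  by move: (zmx_col_rank_lt6 c1 c2 c3 c4 c5 d1); rewrite rcol ltnn.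
have [h hu hsub] := zmx_pi_p_frame d5n0 (zmx_zdisc_neq0 d5n0 rk4).
apply: (PGL_equiv_pi_p_limg dpi (g := h *m g)); first by rewrite unitmx_mul hu gu.
by rewrite lfun_gact_mulmx limg_comp (subv_trans (limgS _ hsub) sub).
Qed.

Lemma general_line_frame (l : {vspace 'M[K]_6}) X : general_line l -> X \in l -> X != 0 ->
  exists2 g, g \in unitmx & gact g L0a = X /\ gact g L0b \in l.
Proof.
move=> [_ _ _ [g0 g0u defl]]; rewrite -defl => /memv_imgP [_ /memv_add_lineP [s [t ->]] ->].
move=> Xn0; have st : (s != 0) || (t != 0).
  apply: contraNT Xn0; rewrite negb_or !negbK => /andP [/eqP -> /eqP ->].
  by rewrite !scale0r addr0 linear0.
have [M Mu [MA MB]] := L0_mix st.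
exists (M *m g0); first by rewrite unitmx_mul Mu g0u.
by rewrite !gact_mulmx MA lfunE; split=> //; rewrite -lfunE memv_img.
Qed.

Lemma adapted_frame (l : {vspace 'M[K]_6}) W1 W2 X p :
  general_line l -> is_pivot l W1 -> X \in l -> X != 0 ->
  \dim W2 = 2%N -> perp_into W2 X -> W2 != W1 -> p != 0 -> p \in W1 -> p \in W2 ->
  exists2 g, g \in unitmx &
    [/\ gact g L0a = X, gact g L0b \in l & W2 = (<[evec K 0 *m g]> + <[evec K 3 *m g]>)%VS].
Proof.
move=> gl [dW1 lW1] Xl Xn0 dW2 perpX W21 pn0 pW1 pW2.
have [_ _ rkl _] := gl.
have perpl Y : Y \in l -> perp_into W1 Y by move=> Yl; apply/wedgeWV_perp_into/(subvP lW1).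
have [g1 g1u [g1a g1b]] := general_line_frame gl Xl Xn0.
have rA : \rank X = 4%N := rkl X Xl Xn0.
have rB : \rank (gact g1 L0b) = 4%N by apply: rkl g1b _; rewrite gact_eq0 ?L0b_neq0.
have defW1 : W1 = (<[evec K 0 *m g1]> + <[evec K 1 *m g1]>)%VS.
  by apply: pivot_of_frame => //; rewrite ?g1a //; apply: perpl.
have /memv_add_lineP [a0 [a1 defp]] : p \in (<[evec K 0 *m g1]> + <[evec K 1 *m g1]>)%VS.
  by rewrite -defW1.
have a01 : (a0 != 0) || (a1 != 0).
  apply: contraNT pn0; rewrite negb_or !negbK defp => /andP [/eqP -> /eqP ->].
  by rewrite !scale0r addr0.
have [M Mu [e0M MA MB]] := L0_pivot_rotate a01.
have g2u : M *m g1 \in unitmx by rewrite unitmx_mul Mu g1u.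
have [g2a g2b] : gact (M *m g1) L0a = X /\ gact (M *m g1) L0b = gact g1 L0b.
  by rewrite !gact_mulmx MA MB g1a.
have e0g2 : evec K 0 *m (M *m g1) = p by rewrite mulmxA e0M mulmxDl -!scalemxAl defp.
have defW1' : W1 = (<[evec K 0 *m (M *m g1)]> + <[evec K 1 *m (M *m g1)]>)%VS.
  by apply: pivot_of_frame => //; rewrite ?g2a ?g2b //; apply: perpl.
have e0W2 : evec K 0 *m (M *m g1) \in W2 by rewrite e0g2.
have perpa : perp_into W2 (gact (M *m g1) L0a) by rewrite g2a.
have ra : \rank (gact (M *m g1) L0a) = 4%N by rewrite g2a.
have [g gu [defW2 ga gb]] := pivot_second_frame g2u defW1' dW2 e0W2 W21 perpa ra.
by exists g; rewrite // ga gb g2a g2b.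
Qed.

Lemma pi_p_equiv_of_pivots (pi l1 l2 : {vspace 'M[K]_6}) W1 W2 p : 2%:R != 0 :> K ->
  \dim pi = 3%N -> skew_space pi -> all_rank 4 pi ->
  (l1 <= pi)%VS -> general_line l1 -> is_pivot l1 W1 ->
  (l2 <= pi)%VS -> general_line l2 -> is_pivot l2 W2 ->
  W1 != W2 -> p != 0 -> p \in W1 -> p \in W2 -> PGL_equiv (pi_p K) pi.
Proof.
move=> two_n0 dpi skpi rkpi l1pi gl1 pv1 l2pi gl2 [dW2 l2W2] W12 pn0 pW1 pW2.
have perp2 Y : Y \in l2 -> perp_into W2 Y by move=> Yl; apply/wedgeWV_perp_into/(subvP l2W2).
have [[dl1 _ _ _] [dl2 _ _ _]] := (gl1, gl2).
set X := vpick (l1 :&: l2)%VS.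
have Xn0 : X != 0 by rewrite vpick0 (lines_in_plane_meet dpi).
have /andP [Xl1 Xl2] : (X \in l1) && (X \in l2) by rewrite -memv_cap memv_pick.
have W21 : W2 != W1 by rewrite eq_sym.
have [g gu [ga gb defW2]] := adapted_frame gl1 pv1 Xl1 Xn0 dW2 (perp2 X Xl2) W21 pn0 pW1 pW2.
have [g' g'u [g'a g'b]] := general_line_frame gl2 Xl2 Xn0.
set Y := gact g' L0b; have Ypi : Y \in pi := subvP l2pi _ g'b.
have skY : Y^T = - Y by apply/eqP/skpi.
have perpY : perp_into (<[evec K 0 *m g]> + <[evec K 3 *m g]>)%VS Y.
  by rewrite -defW2; apply: perp2.
have defZ := skew_block0_zmx two_n0 (gact_skew (invmx g) skY) (perp_e0e3_block0 gu perpY).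
set Z := gact (invmx g) Y in defZ.
have sub : (linfun (gact g) @: (<[L0a]> + <[L0b]> + <[Z]>) <= pi)%VS.
  rewrite !limgD !limg_line !lfunE /= ga /Z gactVK // !subv_add -!memvE Ypi.
  by rewrite !(subvP l1pi).
have rcol : \rank (col_mx L0a Z) = 6%N.
  rewrite -(gactK gu L0a) ga /Z mxrank_col_gact ?unitmx_inv // -g'a.
  by rewrite mxrank_col_gact // mxrank_col_L0.
rewrite defZ in sub rcol; exact: plane_normal_form two_n0 dpi rkpi gu sub rcol.
Qed.

End Plane.

Theorem mainTheorem8 (R : realType) (pi : {vspace 'M[R[i]]_6}) :
  \dim pi = 3%N -> skew_space pi -> all_rank 4 pi ->
  (exists l, (l <= pi)%VS /\ general_line l) ->
  (exists2 p : 'rV[R[i]]_6, p != 0 &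
     forall l W, (l <= pi)%VS -> general_line l -> is_pivot l W -> p \in W) ->
  (exists l1 l2 W1 W2,
     [/\ (l1 <= pi)%VS, general_line l1 & is_pivot l1 W1] /\
     [/\ (l2 <= pi)%VS, general_line l2 & is_pivot l2 W2] /\ W1 != W2) ->
  PGL_equiv (@pi_p _) pi.
Proof.
(* The hypothesis that [pi] contains a general line follows from the last one. *)
move=> dpi skpi rkpi _ [p pn0 pivots_p] [l1 [l2 [W1 [W2 [[l1pi gl1 pv1] [[l2pi gl2 pv2] W12]]]]]].
apply: (pi_p_equiv_of_pivots _ dpi skpi rkpi l1pi gl1 pv1 l2pi gl2 pv2 W12 pn0).
- by rewrite pnatr_eq0.
- exact: pivots_p pv1.
- exact: pivots_p pv2.
Qed.
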